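(* Let $\mathfrak{n}$ be a finite-dimensional Lie algebra over $\mathbb{Q}$ and let $f\in\mathrm{Aut}\,\mathfrak{n}$. There is an $f$-invariant $\mathbb{Z}$-grading $\mathfrak{n}^{\overline{\mathbb{Q}}}=\oplus_{k\in\mathbb{Z}}\mathfrak{n}^{\overline{\mathbb{Q}}}_k$ of $\mathfrak{n}^{\overline{\mathbb{Q}}}=\overline{\mathbb{Q}}\otimes\mathfrak{n}$ such that all eigenvalues of $f$ on $\mathfrak{n}^{\overline{\mathbb{Q}}}_0$ are roots of unity. In particular, if no eigenvalue of $f$ is a root of unity, then $\mathfrak{n}^{\overline{\mathbb{Q}}}$ admits a very special grading.
   Context: A grading of a Lie algebra $\mathfrak{m}$ is a decomposition $\mathfrak{m}=\oplus_{k\in\mathbb{Z}}\mathfrak{m}_k$ with $[\mathfrak{m}_k,\mathfrak{m}_l]\subset\mathfrak{m}_{k+l}$; it is very special if $\mathfrak{m}_0=0$. Eigenvalues are taken in $\overline{\mathbb{Q}}$. *)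

From HB Require Import structures.
From mathcomp Require Import all_boot all_order all_algebra all_field.
Set Implicit Arguments. Unset Strict Implicit. Unset Printing Implicit Defensive.
Import Order.TTheory GRing.Theory Num.Theory.
Local Open Scope ring_scope.

(* A finite-dimensional Lie algebra over Q with basis e_0..e_(n-1) is given by
   its structure constants: c i j = [e_i, e_j] in Q^n (row vectors).
   The bracket on F^n = F (x)_Q Q^n (F a field, Q -> F via ratr) is the
   bilinear extension.  For F = rat this is the Lie algebra itself, for
   F = algC (the algebraic closure of Q) it is the scalar extension. *)
Definition lbr (F : fieldType) (n : nat) (c : 'I_n -> 'I_n -> 'rV[rat]_n)
  (u v : 'rV[F]_n) : 'rV[F]_n :=
  \sum_(i < n) \sum_(j < n) (u 0 i * v 0 j) *: map_mx ratr (c i j).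

Definition is_lie (n : nat) (c : 'I_n -> 'I_n -> 'rV[rat]_n) : Prop :=
  (forall u : 'rV[rat]_n, lbr c u u = 0) /\
  (forall u v w : 'rV[rat]_n,
     lbr c u (lbr c v w) + lbr c v (lbr c w u) + lbr c w (lbr c u v) = 0).

(* f (acting on row vectors by right multiplication) is a Lie algebra
   automorphism of (Q^n, c). *)
Definition is_lie_aut (n : nat) (c : 'I_n -> 'I_n -> 'rV[rat]_n)
  (f : 'M[rat]_n) : Prop :=
  f \in unitmx /\
  forall u v : 'rV[rat]_n, lbr c u v *m f = lbr c (u *m f) (v *m f).

Definition is_grading (F : fieldType) (n : nat) (c : 'I_n -> 'I_n -> 'rV[rat]_n)
  (V : int -> 'M[F]_n) : Prop :=
  exists N : nat,
    (forall k : int, (N%:Z < `|k|)%R -> V k = 0) /\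
    (\sum_(i < (N + N).+1) V (i%:Z - N%:Z) == 1%:M)%MS /\
    mxdirect (\sum_(i < (N + N).+1) V (i%:Z - N%:Z)) /\
    (forall (k l : int) (u v : 'rV[F]_n),
        (u <= V k)%MS -> (v <= V l)%MS -> (lbr c u v <= V (k + l)%R)%MS).

Definition grading_invariant (F : fieldType) (n : nat) (V : int -> 'M[F]_n)
  (g : 'M[F]_n) : Prop :=
  forall k : int, (V k *m g <= V k)%MS.

Definition is_root_of_unity (F : fieldType) (a : F) : Prop :=
  exists m : nat, (0 < m)%N /\ a ^+ m = 1.

Definition very_special (F : fieldType) (n : nat) (V : int -> 'M[F]_n) : Prop :=
  V 0 = 0.

(* Let lambda_1, ..., lambda_r be the distinct eigenvalues of f over algC and G_j
   the generalized eigenspaces.  Since f is an automorphism, f - lambda mu acts on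
   [u, v] by a Leibniz rule, so [G_i, G_j] lies in the generalized eigenspace of
   lambda_i lambda_j, which is zero unless this is an eigenvalue.  It therefore
   suffices to find weights phi : {1..r} -> Z with phi k = phi i + phi j whenever
   lambda_i lambda_j = lambda_k, and phi i = 0 only if lambda_i is a root of unity;
   the grading is then V_k = (+)_{phi j = k} G_j.
   The vectors e_i + e_j - e_k of these relations span a subspace L of Q^r.  Some
   rational vector orthogonal to L is nonzero at every coordinate i with e_i not
   in L, and clearing its denominators gives phi.  If phi i = 0 then e_i lies in L,
   so d e_i is an integer combination of relations for some d > 0, i.e.
   lambda_i ^ d = 1. *)

From HB Require Import structures.
From mathcomp Require Import all_boot all_order all_algebra all_field.
From mathcomp Require Import zify.
Set Implicit Arguments. Unset Strict Implicit. Unset Printing Implicit Defensive.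
Import Order.TTheory GRing.Theory Num.Theory.
Local Open Scope ring_scope.

Lemma clear_denominators (I : finType) (x : I -> rat) :
  exists2 d : int, 0 < d & exists z : I -> int, forall i, (z i)%:~R = x i * d%:~R.
Proof.
exists (\prod_i denq (x i)); first by apply: prodr_gt0 => i _; apply: denq_gt0.
exists (fun i => numq (x i) * \prod_(j | j != i) denq (x j)) => i.
by rewrite (intrM rat) numqE [in RHS](bigD1 i) //= (intrM rat) mulrA.
Qed.

Lemma poly_nonroot_nat (R : numDomainType) (p : {poly R}) :
  p != 0 -> exists k : nat, ~~ root p k%:R.
Proof.
move=> p0.
have /allPn[_ /mapP[k _ ->] pk] : ~~ all (root p) [seq k%:R | k <- iota 0 (size p)].
  apply/negP => /(max_poly_roots p0).
  rewrite map_inj_uniq ?iota_uniq => [|a b /eqP]; last by rewrite eqr_nat => /eqP.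
  by rewrite size_map size_iota ltnn => /(_ isT).
by exists k.
Qed.

(* Rows of K are read as polynomials, and x is a column of powers of a common non-root. *)
Lemma exists_col_nonorthogonal_rows (R : numDomainType) r m (K : 'M[R]_(r, m)) :
  exists x : 'cV[R]_m, forall i, row i K != 0 -> (K *m x) i 0 != 0.
Proof.
case: m K => [|m] K; first by exists 0 => i; rewrite thinmx0 eqxx.
pose p i := \poly_(j < m.+1) K i (inord j).
have p_neq0 i : row i K != 0 -> p i != 0.
  apply: contra => /eqP pi0; apply/eqP/rowP => j; rewrite !mxE.
  have := coef_poly m.+1 (fun j => K i (inord j)) j.
  by rewrite -/(p i) pi0 coef0 ltn_ord inord_val.
have [k] : exists k : nat, ~~ root (\prod_(i | row i K != 0) p i) k%:R.
  by apply/poly_nonroot_nat/prodf_neq0.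
rewrite /root horner_prod => /prodf_neq0 pk_neq0.
exists (\col_j (k%:R ^+ j)) => i /pk_neq0.
suff -> : (K *m \col_j (k%:R ^+ j)) i 0 = (p i).[k%:R] by [].
by rewrite horner_poly mxE; apply: eq_bigr => j _; rewrite mxE inord_val.
Qed.

Lemma coker_vector_support (R : numFieldType) m r (M : 'M[R]_(m, r)) :
  exists2 psi : 'cV[R]_r, M *m psi = 0 &
    forall i, psi i 0 = 0 -> ((delta_mx 0 i : 'rV_r) <= M)%MS.
Proof.
have [x x_nonorth] := exists_col_nonorthogonal_rows (cokermx M).
exists (cokermx M *m x) => [|i psi_i0]; first by rewrite mulmxA mulmx_coker mul0mx.
by rewrite submxE -rowE; apply/negPn/negP => /x_nonorth; rewrite psi_i0 eqxx.
Qed.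

Lemma map_mx_intr_inj (R : numDomainType) m n :
  injective (map_mx intr : 'M[int]_(m, n) -> 'M[R]_(m, n)).
Proof.
move=> A B /matrixP eqAB; apply/matrixP => i j.
by apply: (@intr_inj R); have := eqAB i j; rewrite !mxE.
Qed.

Section MultiplicativePower.
Variables (F : fieldType) (r : nat) (lam : 'I_r -> F).

Definition mpow (m : 'rV[int]_r) : F := \prod_j lam j ^ m 0 j.

Lemma prodrXz (I : Type) (s : seq I) (G : I -> F) (z : int) :
  (\prod_(i <- s) G i) ^ z = \prod_(i <- s) G i ^ z.
Proof.
case: z => k /=; first by rewrite prodrXl.
by rewrite NegzE -exprnN -prodrXl -prodfV; apply: eq_bigr => i _; rewrite exprnN.
Qed.

Lemma mpow0 : mpow 0 = 1.
Proof. by rewrite /mpow big1 // => j _; rewrite mxE expr0z. Qed.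

Lemma mpowZ (z : int) m : mpow (z *: m) = mpow m ^ z.
Proof. by rewrite /mpow prodrXz; apply: eq_bigr => j _; rewrite mxE exprz_exp mulrC. Qed.

Lemma mpow_delta i : mpow (delta_mx 0 i) = lam i.
Proof.
rewrite /mpow (bigD1 i) //= big1 ?mulr1 => [|j ji]; first by rewrite mxE !eqxx.
by rewrite mxE (negPf ji) andbF expr0z.
Qed.

Hypothesis lam_neq0 : forall j, lam j != 0.

Lemma mpowD m1 m2 : mpow (m1 + m2) = mpow m1 * mpow m2.
Proof.
by rewrite /mpow -big_split; apply: eq_bigr => j _; rewrite mxE exprzDr // unitfE.
Qed.

Lemma mpow_sum (I : finType) (m : I -> 'rV[int]_r) :
  mpow (\sum_k m k) = \prod_k mpow (m k).
Proof. exact: (big_morph _ mpowD mpow0). Qed.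

Lemma mpow_rowspace_root_of_unity k (M : 'M[int]_(k, r)) i :
  (forall l, mpow (row l M) = 1) ->
  ((delta_mx 0 i : 'rV[rat]_r) <= map_mx intr M)%MS ->
  is_root_of_unity (lam i).
Proof.
move=> M_rel /submxP[w def_delta].
have [d d_gt0 [z def_z]] := clear_denominators (fun l => w 0 l).
have def_dZ : d *: delta_mx 0 i = \row_l z l *m M.
  apply: (@map_mx_intr_inj rat).
  rewrite map_mxM map_mxZ /= map_delta_mx def_delta scalemxAl.
  by congr (_ *m _); apply/rowP => l; rewrite !mxE def_z mulrC.
have := congr1 mpow def_dZ; rewrite mulmx_sum_row mpowZ mpow_delta mpow_sum.
rewrite big1 => [|l _]; last by rewrite mxE mpowZ M_rel exp1rz.
by case: d d_gt0 {def_z def_dZ} => // d d_gt0 lam_d; exists d.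
Qed.

End MultiplicativePower.

Lemma exists_weight_orthogonal_relations (F : fieldType) k r (lam : 'I_r -> F)
    (M : 'M[int]_(k, r)) :
  (forall j, lam j != 0) -> (forall l, mpow lam (row l M) = 1) ->
  exists2 phi : 'cV[int]_r, M *m phi = 0 &
    forall i, phi i 0 = 0 -> is_root_of_unity (lam i).
Proof.
move=> lam_neq0 M_rel.
have [psi Mpsi0 psi_supp] := coker_vector_support (map_mx intr M : 'M[rat]_(k, r)).
have [d d_gt0 [z def_z]] := clear_denominators (fun i => psi i 0).
have def_dpsi : map_mx intr (\col_i z i) = d%:~R *: psi.
  by apply/colP => i; rewrite !mxE def_z mulrC.
exists (\col_i z i) => [|i].
  apply: (@map_mx_intr_inj rat).
  by rewrite map_mxM def_dpsi -scalemxAr Mpsi0 scaler0 map_mx0.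
rewrite mxE => zi0; apply: (mpow_rowspace_root_of_unity lam_neq0 M_rel); apply: psi_supp.
have := congr1 (fun v : 'cV[rat]_r => v i 0) def_dpsi; rewrite !mxE zi0 => /esym/eqP.
by rewrite mulf_eq0 intr_eq0 gt_eqF //= => /eqP.
Qed.

Lemma exists_multiplicative_weight (F : fieldType) r (lam : 'I_r -> F) :
  (forall j, lam j != 0) ->
  exists phi : 'I_r -> int,
    (forall i j k, lam i * lam j = lam k -> phi k = phi i + phi j) /\
    (forall i, phi i = 0 -> is_root_of_unity (lam i)).
Proof.
move=> lam_neq0.
pose rvec (t : 'I_r * 'I_r * 'I_r) : 'rV[int]_r := let: (i, j, k) := t in
  if lam i * lam j == lam k then delta_mx 0 i + delta_mx 0 j - delta_mx 0 k else 0.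
pose M := \matrix_(l < #|{: 'I_r * 'I_r * 'I_r}|) rvec (enum_val l).
have M_rel l : mpow lam (row l M) = 1.
  rewrite rowK /rvec; case: (enum_val l) => [[i j] k].
  case: eqP => [lamij|_]; last exact: mpow0.
  by rewrite !mpowD // -scaleN1r mpowZ !mpow_delta lamij exprN1 mulfV // -lamij mulf_neq0.
have [phi M_phi phi_root] := exists_weight_orthogonal_relations lam_neq0 M_rel.
exists (fun i => phi i 0); split => [i j k lamij|]; last exact: phi_root.
have := congr1 (row (enum_rank (i, j, k))) M_phi.
rewrite row_mul rowK enum_rankK /rvec lamij eqxx !mulmxDl mulNmx -!rowE row0.
by move/rowP/(_ 0); rewrite !mxE => /eqP; rewrite subr_eq0 => /eqP.
Qed.

Section Bracket.
Variables (F : fieldType) (n : nat) (c : 'I_n -> 'I_n -> 'rV[rat]_n).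
Local Notation C i j := (map_mx (ratr : rat -> F) (c i j)).
Implicit Types u v : 'rV[F]_n.

Definition ad_mx (u : 'rV[F]_n) : 'M[F]_n :=
  \matrix_(j, k) \sum_i u 0 i * C i j 0 k.
Definition rad_mx (v : 'rV[F]_n) : 'M[F]_n :=
  \matrix_(i, k) \sum_j v 0 j * C i j 0 k.

Lemma lbr_rad_mx u v : lbr c u v = u *m rad_mx v.
Proof.
apply/rowP => k; rewrite /lbr summxE !mxE; apply: eq_bigr => i _.
rewrite summxE mxE mulr_sumr; apply: eq_bigr => j _.
by rewrite mxE mulrA.
Qed.

Lemma lbr_ad_mx u v : lbr c u v = v *m ad_mx u.
Proof.
apply/rowP => k; rewrite /lbr summxE.
under eq_bigr do rewrite summxE.
rewrite mxE exchange_big; apply: eq_bigr => j _.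
rewrite mxE mulr_sumr; apply: eq_bigr => i _.
by rewrite !mxE mulrA [u 0 i * _]mulrC.
Qed.

Lemma lbr0l v : lbr c 0 v = 0. Proof. by rewrite lbr_rad_mx mul0mx. Qed.
Lemma lbr0r u : lbr c u 0 = 0. Proof. by rewrite lbr_ad_mx mul0mx. Qed.
Lemma lbrZl a u v : lbr c (a *: u) v = a *: lbr c u v.
Proof. by rewrite !lbr_rad_mx scalemxAl. Qed.
Lemma lbrZr a u v : lbr c u (a *: v) = a *: lbr c u v.
Proof. by rewrite !lbr_ad_mx scalemxAl. Qed.
Lemma lbrBl u1 u2 v : lbr c (u1 - u2) v = lbr c u1 v - lbr c u2 v.
Proof. by rewrite !lbr_rad_mx mulmxBl. Qed.
Lemma lbrBr u v1 v2 : lbr c u (v1 - v2) = lbr c u v1 - lbr c u v2.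
Proof. by rewrite !lbr_ad_mx mulmxBl. Qed.
Lemma lbr_suml (I : Type) (s : seq I) (P : pred I) (u : I -> 'rV[F]_n) v :
  lbr c (\sum_(i <- s | P i) u i) v = \sum_(i <- s | P i) lbr c (u i) v.
Proof. by rewrite lbr_rad_mx mulmx_suml; apply: eq_bigr => i _; rewrite lbr_rad_mx. Qed.
Lemma lbr_sumr (I : Type) (s : seq I) (P : pred I) u (v : I -> 'rV[F]_n) :
  lbr c u (\sum_(i <- s | P i) v i) = \sum_(i <- s | P i) lbr c u (v i).
Proof. by rewrite lbr_ad_mx mulmx_suml; apply: eq_bigr => i _; rewrite lbr_ad_mx. Qed.

Lemma lbr_delta i j : lbr c (delta_mx 0 i) (delta_mx 0 j) = C i j.
Proof.
rewrite /lbr (bigD1 i) //= [X in _ + X]big1 => [|i' i'_neq_i]; last first.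
  by apply: big1 => j' _; rewrite mxE (negPf i'_neq_i) andbF mul0r scale0r.
rewrite addr0 (bigD1 j) //= [X in _ + X]big1 => [|j' j'_neq_j]; last first.
  by rewrite [delta_mx 0 j 0 j']mxE (negPf j'_neq_j) andbF mulr0 scale0r.
by rewrite addr0 !mxE !eqxx mulr1 scale1r.
Qed.

End Bracket.

Lemma map_lbr (F : numFieldType) n c (u v : 'rV[rat]_n) :
  map_mx (ratr : rat -> F) (lbr c u v) = lbr c (map_mx ratr u) (map_mx ratr v).
Proof.
rewrite /lbr map_mx_sum; apply: eq_bigr => i _; rewrite map_mx_sum; apply: eq_bigr => j _.
rewrite map_mxZ rmorphM /= !mxE; congr (_ *: _).
by apply/matrixP => x y; rewrite !mxE fmorph_rat.
Qed.

Lemma lie_aut_map (F : numFieldType) n c (f : 'M[rat]_n) : is_lie_aut c f ->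
  forall u v : 'rV[F]_n, lbr c u v *m map_mx ratr f =
    lbr c (u *m map_mx ratr f) (v *m map_mx ratr f).
Proof.
move=> [_ f_aut] u v; set fF := map_mx ratr f.
have aut_delta i j : map_mx (ratr : rat -> F) (c i j) *m fF =
    lbr c (delta_mx 0 i *m fF) (delta_mx 0 j *m fF).
  have := congr1 (map_mx (ratr : rat -> F)) (f_aut (delta_mx 0 i) (delta_mx 0 j)).
  rewrite lbr_delta !map_mxM map_lbr !map_mxM !map_delta_mx => <-.
  by congr (_ *m _); apply/matrixP => x y; rewrite !mxE fmorph_rat.
rewrite [u in RHS]row_sum_delta [v in RHS]row_sum_delta !mulmx_suml lbr_suml.
apply: eq_bigr => i _; rewrite mulmx_suml lbr_sumr; apply: eq_bigr => j _.
by rewrite -!scalemxAl lbrZl lbrZr -aut_delta scalerA scalemxAl.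
Qed.

Section GeneralizedEigenvectors.
Variables (F : fieldType) (n' : nat) (c : 'I_n'.+1 -> 'I_n'.+1 -> 'rV[rat]_n'.+1).
Variable A : 'M[F]_n'.+1.
Hypothesis A_aut : forall u v, lbr c u v *m A = lbr c (u *m A) (v *m A).

Lemma lbr_mulmx_sub_scalar (l m : F) u v :
  lbr c u v *m (A - (l * m)%:M) =
  lbr c (u *m (A - l%:M)) (v *m A) + l *: lbr c u (v *m (A - m%:M)).
Proof.
rewrite !mulmxBr A_aut !mul_mx_scalar lbrBl lbrBr lbrZl !lbrZr scalerBr scalerA.
by rewrite addrA subrK.
Qed.

Lemma lbr_gen_eigenvector (l m : F) a b u v :
  u *m (A - l%:M) ^+ a = 0 -> v *m (A - m%:M) ^+ b = 0 ->
  lbr c u v *m (A - (l * m)%:M) ^+ (a + b) = 0.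
Proof.
have commA k : comm_mx A ((A - m%:M) ^+ k).
  apply: commrX; rewrite /GRing.comm -!mulmxE mulmxBr mulmxBl.
  by rewrite mul_mx_scalar mul_scalar_mx.
move: {2}(a + b)%N (erefl (a + b)%N) => s; elim: s a b u v => [|s IHs] a b u v.
  move/eqP; rewrite addn_eq0 => /andP[/eqP-> /eqP->].
  by rewrite !expr0 !mulmx1 => -> _; rewrite lbr0l.
case: a => [|a]; first by rewrite expr0 mulmx1 => _ -> _; rewrite lbr0l mul0mx.
case: b => [|b]; first by rewrite expr0 mulmx1 => _ _ ->; rewrite lbr0r mul0mx.
rewrite addSn => -[ab_s] uA0 vA0.
rewrite exprS -mulmxE mulmxA lbr_mulmx_sub_scalar mulmxDl -scalemxAl.
rewrite (IHs a b.+1) // ?add0r; last first.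
- by rewrite -mulmxA (commA b.+1) mulmxA vA0 mul0mx.
- by rewrite -mulmxA mulmxE -exprS.
rewrite -addSnnS (IHs a.+1 b) ?scaler0 // ?addSnnS //.
by rewrite -mulmxA mulmxE -exprS.
Qed.

End GeneralizedEigenvectors.

Lemma geigenspace_eq0 (F : fieldType) n' (A : 'M[F]_n'.+1) a :
  ~~ eigenvalue A a -> geigenspace A a = 0.
Proof.
rewrite /eigenvalue /eigenspace negbK kermx_eq0 row_free_unit => unitAa.
by apply/eqP; rewrite geigenspaceE kermx_eq0 row_free_unit unitrX.
Qed.

Section Spectrum.
Variables (F : closedFieldType) (n' : nat) (A : 'M[F]_n'.+1).

Definition char_roots : seq F := sval (closed_field_poly_normal (char_poly A)).

Lemma char_poly_roots : char_poly A = \prod_(z <- char_roots) ('X - z%:P).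
Proof.
rewrite /char_roots; case: closed_field_poly_normal => s /= ->.
by rewrite (monicP (char_poly_monic A)) scale1r.
Qed.

Lemma size_char_roots : size char_roots = n'.+1.
Proof. by have := size_char_poly A; rewrite char_poly_roots size_prod_XsubC => -[]. Qed.

Definition spectrum : seq F := undup char_roots.

Lemma eigenvalue_spectrum a : eigenvalue A a = (a \in spectrum).
Proof. by rewrite eigenvalue_root_char char_poly_roots root_prod_XsubC mem_undup. Qed.

Definition eigenv (j : 'I_(size spectrum)) : F := spectrum`_j.

Lemma eigenv_inj : injective eigenv.
Proof. by move=> i j /eqP; rewrite nth_uniq ?undup_uniq // => /eqP/val_inj. Qed.

Lemma eigenvalue_eigenv j : eigenvalue A (eigenv j).
Proof. by rewrite eigenvalue_spectrum mem_nth. Qed.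

Lemma eigenvalueP_eigenv a : eigenvalue A a -> exists j, eigenv j = a.
Proof.
rewrite eigenvalue_spectrum -index_mem => a_idx.
by exists (Ordinal a_idx); rewrite /eigenv nth_index // -index_mem.
Qed.

Lemma horner_mx_XsubC_expr a k :
  horner_mx A (('X - a%:P) ^+ k) = (A - a%:M) ^+ k.
Proof. by rewrite rmorphXn /= rmorphB /= horner_mx_X horner_mx_C. Qed.

(* For the cofactor q of the a-part of char_poly A, a Bezout identity for (X - a)^N
   and q gives W = W u2(A) q(A) on W := kermx ((A - a)^N), and q (X - a)^n is a
   multiple of char_poly A. *)
Lemma kermx_expr_sub_geigenspace a N :
  (kermx ((A - a%:M) ^+ N) <= geigenspace A a)%MS.
Proof.
set q := \prod_(z <- char_roots | z != a) ('X - z%:P).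
have coprime_q : coprimep (('X - a%:P) ^+ N) q.
  apply: coprimep_expl; rewrite /q.
  apply: (big_ind (coprimep ('X - a%:P))) => [|p1 p2|z z_neq_a]; first exact: coprimep1.
    by rewrite coprimepMr => -> ->.
  by rewrite coprimep_XsubC root_XsubC.
have char_dvd : char_poly A %| ('X - a%:P) ^+ n'.+1 * q.
  rewrite char_poly_roots (bigID (pred1 a)) /= dvdp_mul //.
  rewrite (eq_bigr (fun _ => 'X - a%:P)) => [|z /eqP -> //].
  rewrite big_const_seq iter_mulr_1 dvdp_exp2l // -size_char_roots.
  exact: count_size.
have [[u1 u2] /= bezout] := Bezout_eq1_coprimepP _ _ coprime_q.
rewrite geigenspaceE; apply/sub_kermxP.
set W := kermx _; have W0 : W *m (A - a%:M) ^+ N = 0 := mulmx_ker _.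
have -> : W = W *m horner_mx A u2 *m horner_mx A q.
  transitivity (W *m horner_mx A (('X - a%:P) ^+ N * u1 + u2 * q)).
    by rewrite mulrC bezout rmorph1 mulmx1.
  rewrite rmorphD !rmorphM /= mulmxDr horner_mx_XsubC_expr -!mulmxE !mulmxA.
  by rewrite W0 mul0mx add0r.
rewrite -mulmxA -(horner_mx_XsubC_expr a) mulmxE -rmorphM mulrC.
by case/dvdpP: char_dvd => p ->; rewrite rmorphM /= Cayley_Hamilton !mulr0.
Qed.

Lemma geigenspace_sum_full : (1%:M <= \sum_j geigenspace A (eigenv j))%MS.
Proof.
have coprime_XsubC : {in predT &, forall i j : 'I_(size spectrum), j != i ->
    coprimep (('X - (eigenv i)%:P) ^+ n'.+1) (('X - (eigenv j)%:P) ^+ n'.+1)}.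
  move=> i j _ _ j_neq_i; apply/coprimep_expl/coprimep_expr.
  by rewrite coprimep_XsubC root_XsubC; apply: contra j_neq_i => /eqP/eigenv_inj ->.
have minpoly_dvd : mxminpoly A %| \prod_(j in predT) ('X - (eigenv j)%:P) ^+ n'.+1.
  apply: dvdp_trans (mxminpoly_dvd_char A) _.
  rewrite char_poly_roots -big_undup_iterop_count (big_nth 0) big_mkord.
  apply: (big_ind2 (fun p q => p %| q)) => [|p1 p2 q1 q2|j _]; first exact: dvdpp.
    exact: dvdp_mul.
  rewrite -[iterop _ _ _ _]/(_ ^+ _) dvdp_exp2l // -size_char_roots.
  exact: count_size.
by rewrite -(kermxpoly_min minpoly_dvd) (kermxpoly_prod A coprime_XsubC).
Qed.

End Spectrum.

Arguments eigenv {F n'} A j.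

Lemma lbr_geigenspace (F : closedFieldType) n' c (A : 'M[F]_n'.+1) :
  (forall u v, lbr c u v *m A = lbr c (u *m A) (v *m A)) ->
  forall l m u v, (u <= geigenspace A l)%MS -> (v <= geigenspace A m)%MS ->
  (lbr c u v <= geigenspace A (l * m))%MS.
Proof.
move=> A_aut l m u v u_gen v_gen.
apply: submx_trans (kermx_expr_sub_geigenspace A (l * m) (n'.+1 + n'.+1)).
by apply/sub_kermxP; apply: lbr_gen_eigenvector => //; apply/sub_kermxP; rewrite -geigenspaceE.
Qed.

Lemma mxdirect_sum_capC (F : fieldType) n (I : finType) (G : I -> 'M[F]_n) (P : pred I) :
  mxdirect (\sum_i G i) -> (\sum_(i | P i) G i :&: \sum_(i | ~~ P i) G i = 0)%MS.
Proof.
have: mxdirect ((\sum_(i | P i) G i) + (\sum_(i | ~~ P i) G i))%MS = mxdirect (\sum_i G i).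
  by rewrite !mxdirectE /= [in RHS](bigID P) [X in _ = (_ == X)](bigID P).
by move=> <-; rewrite mxdirect_addsE => /and3P[_ _ /eqP].
Qed.

(* Locked so that mxdirect treats each weight space as an atom instead of
   flattening its inner sum. *)
HB.lock Definition weight_space (F : fieldType) n (I : finType) (G : I -> 'M[F]_n)
  (w : I -> int) (k : int) : 'M[F]_n := (\sum_(i | w i == k) G i)%MS.

Section WeightSpaces.
Variables (F : fieldType) (n : nat) (I : finType) (G : I -> 'M[F]_n) (w : I -> int).

Local Notation weight_space := (weight_space G w).

Definition max_weight : nat := \max_i `|w i|%N.

Lemma weight_space_eq0 k : (forall i, w i != k) -> weight_space k = 0.
Proof. by move=> w_neq_k; rewrite weight_space.unlock big_pred0 // => i; apply/negbTE. Qed.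

Lemma weight_space_out k : max_weight%:Z < `|k| -> weight_space k = 0.
Proof.
move=> k_gt; apply: weight_space_eq0 => i; apply: contraTneq k_gt => <-.
by rewrite -leNgt -abszE lez_nat; apply: leq_bigmax.
Qed.

Lemma sum_weight_spaces :
  (\sum_i G i :=: \sum_(k < (max_weight + max_weight).+1) weight_space (k%:Z - max_weight%:Z))%MS.
Proof.
rewrite weight_space.unlock; apply/eqmxP/andP; split; apply/sumsmx_subP; last first.
  by move=> k _; apply/sumsmx_subP => i _; apply: (sumsmx_sup i).
move=> i _.
have wi_le : (`|w i| <= max_weight)%N by apply: leq_bigmax.
have k_lt : (absz (w i + max_weight%:Z)%R < (max_weight + max_weight).+1)%N by lia.
apply: (sumsmx_sup (Ordinal k_lt)) => //; apply: (sumsmx_sup i) => //=; apply/eqP; lia.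
Qed.

Lemma mxdirect_weight_spaces : mxdirect (\sum_i G i) ->
  mxdirect (\sum_(k < (max_weight + max_weight).+1) weight_space (k%:Z - max_weight%:Z)).
Proof.
move=> dxG; apply/mxdirect_sumsP => k _; apply/eqP; rewrite weight_space.unlock -submx0.
rewrite -[X in (_ <= X)%MS](mxdirect_sum_capC (fun i => w i == k%:Z - max_weight%:Z) dxG).
rewrite capmxS //; apply/sumsmx_subP => k' /andP[_ k'_neq_k]; apply/sumsmx_subP => i /eqP wi.
apply: (sumsmx_sup i) => //; rewrite wi; apply: contra k'_neq_k.
by rewrite (can_eq (addrK _)) eqz_nat => /eqP /val_inj ->.
Qed.

End WeightSpaces.

Section LieGrading.
Variables (n' : nat) (c : 'I_n'.+1 -> 'I_n'.+1 -> 'rV[rat]_n'.+1) (f : 'M[rat]_n'.+1).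
Hypothesis f_aut : is_lie_aut c f.
Local Notation A := (map_mx (ratr : rat -> algC) f).
Local Notation G j := (geigenspace A (eigenv A j)).

Lemma eigenv_neq0 j : eigenv A j != 0.
Proof.
apply/eqP => ev0; have := eigenvalue_eigenv j.
rewrite ev0 /eigenvalue /eigenspace raddf0 subr0 kermx_eq0 row_free_unit map_unitmx.
by case: f_aut => ->.
Qed.

Lemma mxdirect_geigenspaces : mxdirect (\sum_j G j).
Proof. by apply: mxdirect_sum_geigenspace => i j _ _; apply: eigenv_inj. Qed.

Variable phi : 'I_(size (spectrum A)) -> int.
Hypothesis phi_mul :
  forall i j k, eigenv A i * eigenv A j = eigenv A k -> phi k = phi i + phi j.
Hypothesis phi_root : forall i, phi i = 0 -> is_root_of_unity (eigenv A i).
Local Notation V := (weight_space (fun j => G j) phi).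

Lemma lbr_weight_space k l u v :
  (u <= V k)%MS -> (v <= V l)%MS -> (lbr c u v <= V (k + l))%MS.
Proof.
rewrite weight_space.unlock => /sub_sumsmxP[wu ->] /sub_sumsmxP[wv ->].
rewrite lbr_suml; apply: summx_sub => i /eqP phi_i.
rewrite lbr_sumr; apply: summx_sub => j /eqP phi_j.
have := lbr_geigenspace (lie_aut_map f_aut) (submxMl (wu i) (G i)) (submxMl (wv j) (G j)).
have [/eigenvalueP_eigenv[m def_m]|no_ev] := boolP (eigenvalue A (eigenv A i * eigenv A j)).
  move/submx_trans; apply; rewrite -def_m; apply: (sumsmx_sup m) => //.
  by rewrite (phi_mul (esym def_m)) phi_i phi_j.
by rewrite (geigenspace_eq0 no_ev) submx0 => /eqP->; apply: sub0mx.
Qed.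

Lemma weight_space_stable k : (V k *m A <= V k)%MS.
Proof.
rewrite weight_space.unlock sumsmxMr; apply/sumsmx_subP => j phi_j.
by apply: (sumsmx_sup j) => //; apply: comm_mx_stable_geigenspace.
Qed.

Lemma weight_grading : is_grading c V.
Proof.
exists (max_weight phi); split; first exact: weight_space_out.
split; last split; last exact: lbr_weight_space.
  by rewrite submx1 -sum_weight_spaces geigenspace_sum_full.
exact: (mxdirect_weight_spaces phi mxdirect_geigenspaces).
Qed.

Lemma weight_space0_root_of_unity a (v : 'rV[algC]_n'.+1) :
  v != 0 -> (v <= V 0)%MS -> v *m A = a *: v -> is_root_of_unity a.
Proof.
move=> v_neq0 v_sub Av.
have [j def_a] : exists j, eigenv A j = a by apply/eigenvalueP_eigenv/eigenvalueP; exists v.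
rewrite -def_a; apply: phi_root; apply/eqP; apply: contraNT v_neq0 => phi_j.
rewrite -submx0 -(mxdirect_sumsP mxdirect_geigenspaces j isT) sub_capmx.
apply/andP; split.
  by apply: submx_trans (eigenspace_sub_geigen _ _); apply/eigenspaceP; rewrite def_a.
apply: submx_trans v_sub _; rewrite weight_space.unlock; apply/sumsmx_subP => i /eqP phi_i.
by apply: (sumsmx_sup i) => //=; apply: contraNneq phi_j => <-; rewrite phi_i.
Qed.

Lemma weight_space0_eq0 :
  (forall a, eigenvalue A a -> ~ is_root_of_unity a) -> V 0 = 0.
Proof.
move=> no_root; apply: weight_space_eq0 => j; apply/eqP => phi_j.
exact: no_root (eigenvalue_eigenv j) (phi_root phi_j).
Qed.

End LieGrading.

Lemma is_grading_dim0 (F : fieldType) c (V : int -> 'M[F]_0) : is_grading c V.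
Proof.
exists 0%N; split=> [k _|]; first exact: thinmx0.
split; last split.
- by apply/andP; split; rewrite [X in (X <= _)%MS]thinmx0 sub0mx.
- by rewrite mxdirectE /= [X in \rank X]thinmx0 mxrank0 big1 // => i _; rewrite thinmx0 mxrank0.
- by move=> k l u v _ _; rewrite [lbr _ _ _]thinmx0 sub0mx.
Qed.

Theorem lemma8 (n : nat) (c : 'I_n -> 'I_n -> 'rV[rat]_n) (f : 'M[rat]_n) :
  is_lie c -> is_lie_aut c f ->
  (exists V : int -> 'M[algC]_n,
      is_grading c V /\ grading_invariant V (map_mx ratr f) /\
      (forall (a : algC) (v : 'rV[algC]_n),
          v != 0 -> (v <= V 0)%MS -> v *m map_mx ratr f = a *: v ->
          is_root_of_unity a))
  /\
  ((forall a : algC, eigenvalue (map_mx ratr f) a -> ~ is_root_of_unity a) ->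
   exists V : int -> 'M[algC]_n, is_grading c V /\ very_special V).
Proof.
move=> _; case: n c f => [|n'] c f f_aut.
  have grading0 := is_grading_dim0 c (fun _ => 0 : 'M[algC]_0).
  split=> [|_]; exists (fun _ => 0); split=> //.
  by split=> [k|a v]; rewrite ?mul0mx ?submx_refl // thinmx0 eqxx.
have [phi [phi_mul phi_root]] := exists_multiplicative_weight (eigenv_neq0 f_aut).
pose V := weight_space (fun j => geigenspace (map_mx ratr f) (eigenv (map_mx ratr f) j)) phi.
split=> [|no_root]; exists V; split; try exact: weight_grading.
  split=> [k|]; first exact: weight_space_stable.
  exact: weight_space0_root_of_unity.
exact: weight_space0_eq0.
Qed.
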